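(* Let $(X,d)$ be a metric space, $x_0\in X$, $n\geq 1$. For all $a,b,c\in\pi_n(X,x_0)$, $\rho(a,b)=\rho(ac,bc)=\rho(ca,cb)$.
   Context: $\Omega^n(X,x_0)$ is the set of continuous maps $\alpha:[0,1]^n\to X$ with $\alpha(\partial[0,1]^n)=\{x_0\}$, with uniform metric $\mu(\alpha,\beta)=\sup_{t\in[0,1]^n}d(\alpha(t),\beta(t))$. For $a,b\in\pi_n(X,x_0)$, $\rho(a,b)=\inf\{\mu(\alpha,\beta)\mid\alpha\in a,\beta\in b\}$. *)

From Stdlib Require Import Reals.
From Coquelicot Require Import Coquelicot.
From mathcomp Require Import ssreflect ssrfun ssrbool eqtype ssrnat fintype.

Set Implicit Arguments.
Unset Strict Implicit.

Local Open Scope R_scope.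

Definition is_metric (X : Type) (d : X -> X -> R) : Prop :=
  (forall x y, 0 <= d x y) /\
  (forall x y, d x y = 0 <-> x = y) /\
  (forall x y, d x y = d y x) /\
  (forall x y z, d x z <= d x y + d y z).

Definition cube (n : nat) (t : 'I_n -> R) : Prop :=
  forall i, 0 <= t i <= 1.

Definition boundary (n : nat) (t : 'I_n -> R) : Prop :=
  cube t /\ exists i, t i = 0 \/ t i = 1.

(* continuity of alpha restricted to the cube (Euclidean topology,
   expressed with the equivalent max-norm) *)
Definition cont_on_cube (X : Type) (d : X -> X -> R) (n : nat)
  (alpha : ('I_n -> R) -> X) : Prop :=
  forall t, cube t -> forall eps, 0 < eps -> exists delta, 0 < delta /\
    forall s, cube s -> (forall i, Rabs (s i - t i) < delta) ->
      d (alpha s) (alpha t) < eps.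

Definition Omega (X : Type) (d : X -> X -> R) (x0 : X) (n : nat)
  (alpha : ('I_n -> R) -> X) : Prop :=
  cont_on_cube d alpha /\ (forall t, boundary t -> alpha t = x0).

Definition homotopic (X : Type) (d : X -> X -> R) (x0 : X) (n : nat)
  (alpha beta : ('I_n -> R) -> X) : Prop :=
  exists H : R -> ('I_n -> R) -> X,
    (forall u t, 0 <= u <= 1 -> cube t -> forall eps, 0 < eps ->
       exists delta, 0 < delta /\
       forall u' s, 0 <= u' <= 1 -> cube s -> Rabs (u' - u) < delta ->
         (forall i, Rabs (s i - t i) < delta) ->
         d (H u' s) (H u t) < eps) /\
    (forall t, cube t -> H 0 t = alpha t) /\
    (forall t, cube t -> H 1 t = beta t) /\
    (forall u t, 0 <= u <= 1 -> boundary t -> H u t = x0).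

(* uniform metric mu(alpha,beta) = sup_{t in [0,1]^n} d(alpha t, beta t)
   (finite for elements of Omega^n by compactness) *)
Definition mu (X : Type) (d : X -> X -> R) (n : nat)
  (alpha beta : ('I_n -> R) -> X) : R :=
  real (Lub_Rbar (fun r => exists t, cube t /\ r = d (alpha t) (beta t))).

Definition rho (X : Type) (d : X -> X -> R) (x0 : X) (n : nat)
  (alpha beta : ('I_n -> R) -> X) : Rbar :=
  Glb_Rbar (fun r => exists alpha' beta',
    Omega d x0 alpha' /\ Omega d x0 beta' /\
    homotopic d x0 alpha' alpha /\ homotopic d x0 beta' beta /\
    r = mu d alpha' beta').

Definition concat (X : Type) (n : nat) (i0 : 'I_n)
  (alpha gamma : ('I_n -> R) -> X) : ('I_n -> R) -> X :=
  fun t =>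
    if Rle_dec (t i0) (1/2) then alpha (fun i => if i == i0 then 2 * t i else t i)
    else gamma (fun i => if i == i0 then 2 * t i - 1 else t i).

From Stdlib Require Import Reals Lra FunctionalExtensionality.
From Coquelicot Require Import Coquelicot.
From mathcomp Require Import ssreflect ssrfun ssrbool eqtype ssrnat fintype.

Local Open Scope R_scope.

(* Right translation [f |-> f c] of representatives preserves Omega^n and homotopy,
   and it preserves the uniform distance: on the half of the cube where [a c] and
   [b c] both run through [c] they agree, and the value 0 contributed there is
   already attained by [a] and [b] on the boundary.  A homotopy inverse is
   [f |-> f c^-1]: both [(a c) c^-1] and [a] read [a c] along piecewise linear
   reparametrisations of the concatenation coordinate with the same endpoints, and
   the straight-line homotopy between these reparametrisations connects them.  So
   the two sets of distances whose infimum is rho coincide; left translation is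
   symmetric. *)

Definition clamp (x : R) : R := Rmax 0 (Rmin 1 x).

Lemma clamp_in01 x : 0 <= clamp x <= 1.
Proof. rewrite /clamp /Rmax /Rmin; repeat case: Rle_dec; lra. Qed.

Lemma clamp_id x : 0 <= x <= 1 -> clamp x = x.
Proof. rewrite /clamp /Rmax /Rmin; repeat case: Rle_dec; lra. Qed.

Lemma clamp_le0 x : x <= 0 -> clamp x = 0.
Proof. rewrite /clamp /Rmax /Rmin; repeat case: Rle_dec; lra. Qed.

Lemma clamp_ge1 x : 1 <= x -> clamp x = 1.
Proof. rewrite /clamp /Rmax /Rmin; repeat case: Rle_dec; lra. Qed.

Lemma clamp_lip x y : Rabs (clamp x - clamp y) <= Rabs (x - y).
Proof. rewrite /clamp /Rmax /Rmin; repeat case: Rle_dec; split_Rabs; lra. Qed.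

Section Metric.
Context {X : Type} {d : X -> X -> R} (hd : is_metric d).

Lemma dist_xx x : d x x = 0.
Proof. by case: hd => _ [h _]; apply/h. Qed.

Lemma dist_sym x y : d x y = d y x.
Proof. by case: hd => _ [_ [h _]]. Qed.

Lemma dist_triangle x y z : d x z <= d x y + d y z.
Proof. by case: hd => _ [_ [_ h]]. Qed.

End Metric.

Definition upd {n : nat} (i0 : 'I_n) (t : 'I_n -> R) (v : R) : 'I_n -> R :=
  fun i => if i == i0 then v else t i.

Section Update.
Context {n : nat} {i0 : 'I_n}.

Lemma upd_at t v : upd i0 t v i0 = v.
Proof. by rewrite /upd eqxx. Qed.

Lemma upd_upd t v w : upd i0 (upd i0 t v) w = upd i0 t w.
Proof. apply: functional_extensionality => i; rewrite /upd; by case: (i == i0). Qed.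

Lemma upd_id t : upd i0 t (t i0) = t.
Proof. apply: functional_extensionality => i; rewrite /upd; by case: eqP => [->|]. Qed.

Lemma cube_upd t v : cube t -> 0 <= v <= 1 -> cube (upd i0 t v).
Proof. move=> ht hv i; rewrite /upd; by case: (i == i0). Qed.

Lemma boundary_upd01 t v : cube t -> v = 0 \/ v = 1 -> boundary (upd i0 t v).
Proof. move=> ht hv; split; [apply: cube_upd => //; lra | by exists i0; rewrite upd_at]. Qed.

Lemma boundary_upd t v : boundary t -> 0 <= v <= 1 ->
  boundary (upd i0 t v) \/ t i0 = 0 \/ t i0 = 1.
Proof.
  move=> [ht [j hj]] hv; case: (eqVneq j i0) => [<-|ne]; first by right.
  left; split; first exact: cube_upd.
  by exists j; rewrite /upd (negbTE ne).
Qed.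

Lemma upd_close t s v v' k L : 1 <= L ->
  Rabs (v' - v) <= L * k -> (forall i, Rabs (s i - t i) < k) ->
  forall i, Rabs (upd i0 s v' i - upd i0 t v i) <= L * k.
Proof.
  move=> hL hv hs i; rewrite /upd; case: (i == i0) => //.
  have := hs i; have := Rabs_pos (s i - t i); nra.
Qed.

End Update.

Definition cont_on_cylinder {X : Type} (d : X -> X -> R) {n : nat}
    (F : R -> ('I_n -> R) -> X) : Prop :=
  forall u t, 0 <= u <= 1 -> cube t -> forall eps, 0 < eps ->
    exists delta, 0 < delta /\
    forall u' s, 0 <= u' <= 1 -> cube s -> Rabs (u' - u) < delta ->
      (forall i, Rabs (s i - t i) < delta) -> d (F u' s) (F u t) < eps.

Section Cylinder.
Context {X : Type} {d : X -> X -> R} (hd : is_metric d) {n : nat}.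
Implicit Types (F G K : R -> ('I_n -> R) -> X) (f : ('I_n -> R) -> X).

Lemma cont_on_cylinder_ext F G :
  (forall u t, 0 <= u <= 1 -> cube t -> F u t = G u t) ->
  cont_on_cylinder d F -> cont_on_cylinder d G.
Proof.
  move=> FG hF u t hu ht eps he; have [delta [hdelta close]] := hF u t hu ht eps he.
  exists delta; split => // u' s hu' hs du dt; rewrite -!FG //; exact: close.
Qed.

Lemma cont_on_cylinder_cst x : cont_on_cylinder d (fun (_ : R) (_ : 'I_n -> R) => x).
Proof.
  move=> u t _ _ eps he; exists 1; split; first lra.
  by move=> *; rewrite (dist_xx hd).
Qed.

Lemma cont_on_cylinder_stationary f : cont_on_cube d f -> cont_on_cylinder d (fun _ => f).
Proof.
  move=> hf u t hu ht eps he; have [delta [hdelta close]] := hf t ht eps he.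
  exists delta; split => // u' s _ hs _ dt; exact: close.
Qed.

Lemma cont_on_cylinder_at F u :
  0 <= u <= 1 -> cont_on_cylinder d F -> cont_on_cube d (F u).
Proof.
  move=> hu hF t ht eps he; have [delta [hdelta close]] := hF u t hu ht eps he.
  exists delta; split => // s hs dt; apply: close => //.
  by rewrite Rminus_eq_0 Rabs_R0.
Qed.

Lemma cont_on_cylinder_comp F (pu : R -> ('I_n -> R) -> R)
    (pt : R -> ('I_n -> R) -> ('I_n -> R)) L :
  0 < L -> cont_on_cylinder d F ->
  (forall u t, 0 <= u <= 1 -> cube t -> 0 <= pu u t <= 1 /\ cube (pt u t)) ->
  (forall k u t u' s, 0 <= u <= 1 -> cube t -> 0 <= u' <= 1 -> cube s ->
     Rabs (u' - u) < k -> (forall i, Rabs (s i - t i) < k) ->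
     Rabs (pu u' s - pu u t) <= L * k /\
     forall i, Rabs (pt u' s i - pt u t i) <= L * k) ->
  cont_on_cylinder d (fun u t => F (pu u t) (pt u t)).
Proof.
  move=> hL hF maps lip u t hu ht eps he.
  have [pu_in pt_in] := maps u t hu ht.
  have [delta [hdelta close]] := hF _ _ pu_in pt_in eps he.
  exists (delta / (2 * L)); split; first by apply: Rdiv_lt_0_compat; lra.
  move=> u' s hu' hs du dt.
  have [pu_in' pt_in'] := maps u' s hu' hs.
  have [lpu lpt] := lip _ u t u' s hu ht hu' hs du dt.
  have E : L * (delta / (2 * L)) = delta / 2 by field; lra.
  rewrite E in lpu lpt; apply: close => // [|i]; [lra | have := lpt i; lra].
Qed.

(* Pasting lemma: [K] mediates between [G1] and [G2] across the interface
   [p = q], so neither [p] nor [q] needs to be continuous. *)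
Lemma cont_on_cylinder_glue (p q : R -> ('I_n -> R) -> R) G1 G2 K :
  cont_on_cylinder d G1 -> cont_on_cylinder d G2 -> cont_on_cylinder d K ->
  (forall u t, 0 <= u <= 1 -> cube t -> q u t <= p u t -> G1 u t = K u t) ->
  (forall u t, 0 <= u <= 1 -> cube t -> p u t <= q u t -> G2 u t = K u t) ->
  cont_on_cylinder d (fun u t => if Rle_dec (p u t) (q u t) then G1 u t else G2 u t).
Proof.
  move=> h1 h2 hK e1 e2 u t hu ht eps he.
  have he3 : 0 < eps / 3 by lra.
  have [d1 [hd1 c1]] := h1 u t hu ht _ he3.
  have [d2 [hd2 c2]] := h2 u t hu ht _ he3.
  have [d3 [hd3 c3]] := hK u t hu ht _ he3.
  set delta := Rmin d1 (Rmin d2 d3).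
  have [m1 [m2 m3]] : delta <= d1 /\ delta <= d2 /\ delta <= d3.
  { rewrite /delta; have := Rmin_l d2 d3; have := Rmin_r d2 d3.
    have := Rmin_l d1 (Rmin d2 d3); have := Rmin_r d1 (Rmin d2 d3); lra. }
  exists delta; split; first by apply: Rmin_pos => //; apply: Rmin_pos.
  move=> u' s hu' hs du dt.
  have dt' : forall e, delta <= e -> forall i, Rabs (s i - t i) < e.
  { by move=> e le i; have := dt i; lra. }
  have a1 := c1 u' s hu' hs ltac:(lra) (dt' _ m1).
  have a2 := c2 u' s hu' hs ltac:(lra) (dt' _ m2).
  have a3 := c3 u' s hu' hs ltac:(lra) (dt' _ m3).
  have mix : forall A B, A u t = K u t -> B u' s = K u' s ->
      d (A u' s) (A u t) < eps / 3 -> d (B u' s) (B u t) < eps / 3 ->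
      d (A u' s) (B u t) < eps.
  { move=> A B eA eB hA hB.
    have := dist_triangle hd (A u' s) (A u t) (B u t).
    have := dist_triangle hd (K u t) (K u' s) (B u t).
    move: a3 hA; rewrite (dist_sym hd (K u t) (K u' s)) eA -eB; lra. }
  case: Rle_dec => c; case: Rle_dec => c' /=.
  - lra.
  - by apply: mix => //; [apply: e1 => //; lra | apply: e2].
  - by apply: mix => //; [apply: e2 | apply: e1 => //; lra].
  - lra.
Qed.

Lemma cont_on_cylinder_reparam (i0 : 'I_n) F (phi : R -> R -> R) L :
  1 <= L -> cont_on_cylinder d F ->
  (forall u v, 0 <= u <= 1 -> 0 <= v <= 1 -> 0 <= phi u v <= 1) ->
  (forall k u v u' v', 0 <= u <= 1 -> 0 <= v <= 1 -> 0 <= u' <= 1 -> 0 <= v' <= 1 ->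
     Rabs (u' - u) < k -> Rabs (v' - v) < k -> Rabs (phi u' v' - phi u v) <= L * k) ->
  cont_on_cylinder d (fun u t => F u (upd i0 t (phi u (t i0)))).
Proof.
  move=> hL hF maps lip.
  apply: (cont_on_cylinder_comp F (fun u _ => u) (fun u t => upd i0 t (phi u (t i0))) L);
    [lra | exact: hF | |].
  - move=> u t hu ht; split => //; apply: cube_upd => //; exact: maps.
  - move=> k u t u' s hu ht hu' hs du dt; split.
    + have := Rabs_pos (u' - u); nra.
    + apply: upd_close => //; exact: lip.
Qed.

Lemma cont_on_cylinder_retime F (psi : R -> R) L :
  1 <= L -> cont_on_cylinder d F ->
  (forall u, 0 <= u <= 1 -> 0 <= psi u <= 1) ->
  (forall k u u', 0 <= u <= 1 -> 0 <= u' <= 1 -> Rabs (u' - u) < k ->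
     Rabs (psi u' - psi u) <= L * k) ->
  cont_on_cylinder d (fun u t => F (psi u) t).
Proof.
  move=> hL hF maps lip.
  apply: (cont_on_cylinder_comp F (fun u _ => psi u) (fun _ t => t) L);
    [lra | exact: hF | by move=> u t hu ht; split => //; apply: maps |].
  move=> k u t u' s hu _ hu' _ du dt; split; first exact: lip.
  by move=> i; have := dt i; have := Rabs_pos (s i - t i); nra.
Qed.

End Cylinder.

Definition reparam {X : Type} {n : nat} (i0 : 'I_n) (f : ('I_n -> R) -> X)
    (phi : R -> R) : ('I_n -> R) -> X :=
  fun t => f (upd i0 t (phi (t i0))).

Definition reverse {X : Type} {n : nat} (i0 : 'I_n) (g : ('I_n -> R) -> X) :=
  reparam i0 g (fun v => 1 - v).

Definition vanishes_at {X : Type} (x0 : X) {n : nat} (i0 : 'I_n)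
    (f : ('I_n -> R) -> X) (v : R) : Prop :=
  forall t, cube t -> f (upd i0 t v) = x0.

Section Loops.
Context {X : Type} {d : X -> X -> R} {x0 : X} (hd : is_metric d) {n : nat} {i0 : 'I_n}.
Implicit Types (f g a b : ('I_n -> R) -> X).

Lemma reparam_upd f phi t v : reparam i0 f phi (upd i0 t v) = f (upd i0 t (phi v)).
Proof. by rewrite /reparam upd_at upd_upd. Qed.

Lemma concat_eq f g t :
  concat i0 f g t = if Rle_dec (t i0) (1/2) then f (upd i0 t (2 * t i0))
                    else g (upd i0 t (2 * t i0 - 1)).
Proof.
  rewrite /concat; case: Rle_dec => ?; congr (_ _);
  apply: functional_extensionality => i; rewrite /upd; by case: eqP => [->|].
Qed.

Lemma concat_upd f g t v :
  concat i0 f g (upd i0 t v) = if Rle_dec v (1/2) then f (upd i0 t (2 * v))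
                               else g (upd i0 t (2 * v - 1)).
Proof. by rewrite concat_eq !upd_upd upd_at. Qed.

(* Clamping extends each half of a concatenation to a map on the whole cylinder,
   as required by [cont_on_cylinder_glue]. *)
Lemma concat_clamp f g t : cube t ->
  concat i0 f g t = if Rle_dec (t i0) (1/2) then reparam i0 f (fun v => clamp (2 * v)) t
                    else reparam i0 g (fun v => clamp (2 * v - 1)) t.
Proof.
  move=> ht; have := ht i0; rewrite concat_eq /reparam.
  by case: Rle_dec => /= ? ?; rewrite clamp_id //; lra.
Qed.

Lemma vanishes_at01 f v : (forall t, boundary t -> f t = x0) ->
  v = 0 \/ v = 1 -> vanishes_at x0 i0 f v.
Proof. by move=> hf hv t ht; apply/hf/boundary_upd01. Qed.

Lemma concat_vanishes_at_half f g : (forall t, boundary t -> f t = x0) ->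
  vanishes_at x0 i0 (concat i0 f g) (1/2).
Proof.
  move=> hf t ht; rewrite concat_upd; case: Rle_dec => /= [_|]; last lra.
  by apply: vanishes_at01 => //; right; field.
Qed.

Lemma reparam_boundary f phi t :
  (forall v, 0 <= v <= 1 -> 0 <= phi v <= 1) ->
  (forall t, boundary t -> f t = x0) ->
  vanishes_at x0 i0 f (phi 0) -> vanishes_at x0 i0 f (phi 1) ->
  boundary t -> reparam i0 f phi t = x0.
Proof.
  move=> maps hf v0 v1 bt; have ht := bt.1.
  have phi_in := maps _ (ht i0).
  case: (boundary_upd (i0 := i0) _ _ bt phi_in) => [|[E|E]]; first exact: hf.
  - by rewrite /reparam E; apply: v0.
  - by rewrite /reparam E; apply: v1.
Qed.

Lemma cont_on_cylinder_concat (F G : R -> ('I_n -> R) -> X) :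
  cont_on_cylinder d F -> cont_on_cylinder d G ->
  (forall u t, 0 <= u <= 1 -> boundary t -> F u t = x0) ->
  (forall u t, 0 <= u <= 1 -> boundary t -> G u t = x0) ->
  cont_on_cylinder d (fun u => concat i0 (F u) (G u)).
Proof.
  move=> hF hG bF bG.
  apply: cont_on_cylinder_ext => [u t _ ht|]; first by rewrite concat_clamp.
  apply: (cont_on_cylinder_glue hd (fun _ t => t i0) (fun _ _ => 1/2) _ _ (fun _ _ => x0));
    rewrite /reparam.
  - apply: (cont_on_cylinder_reparam i0 F (fun _ v => clamp (2 * v)) 2) => //; first lra.
    + by move=> *; apply: clamp_in01.
    + move=> k u v u' v' *; apply: Rle_trans (clamp_lip _ _) _; split_Rabs; lra.
  - apply: (cont_on_cylinder_reparam i0 G (fun _ v => clamp (2 * v - 1)) 2) => //; first lra.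
    + by move=> *; apply: clamp_in01.
    + move=> k u v u' v' *; apply: Rle_trans (clamp_lip _ _) _; split_Rabs; lra.
  - exact: cont_on_cylinder_cst.
  - move=> u t hu ht h; rewrite clamp_ge1; last lra.
    by apply/bF/boundary_upd01 => //; right.
  - move=> u t hu ht h; rewrite clamp_le0; last lra.
    by apply/bG/boundary_upd01 => //; left.
Qed.

Lemma concat_boundary f g t :
  (forall t, boundary t -> f t = x0) -> (forall t, boundary t -> g t = x0) ->
  boundary t -> concat i0 f g t = x0.
Proof.
  move=> hf hg bt; rewrite concat_clamp; last exact: bt.1.
  have clamp01 : forall v, v <= 0 \/ 1 <= v -> clamp v = 0 \/ clamp v = 1.
  { by move=> v [?|?]; [left; apply: clamp_le0 | right; apply: clamp_ge1]. }
  case: Rle_dec => ?; apply: reparam_boundary => //;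
    by [move=> *; apply: clamp_in01 | apply: vanishes_at01 => //; apply: clamp01; lra].
Qed.

Lemma Omega_concat f g : Omega d x0 f -> Omega d x0 g -> Omega d x0 (concat i0 f g).
Proof.
  move=> [cf bf] [cg bg]; split; last by move=> t; apply: concat_boundary.
  apply: (cont_on_cylinder_at (fun _ => concat i0 f g) 0); first lra.
  apply: cont_on_cylinder_concat; try exact: cont_on_cylinder_stationary.
  - by move=> *; apply: bf.
  - by move=> *; apply: bg.
Qed.

Lemma Omega_reverse g : Omega d x0 g -> Omega d x0 (reverse i0 g).
Proof.
  move=> [cg bg]; split.
  - apply: (cont_on_cylinder_at (fun _ => reverse i0 g) 0); first lra.
    apply: (cont_on_cylinder_reparam i0 (fun _ => g) (fun _ v => 1 - v) 1).
    + lra.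
    + exact: cont_on_cylinder_stationary.
    + by move=> *; lra.
    + by move=> *; split_Rabs; lra.
  - move=> t; apply: reparam_boundary => //; first by move=> *; lra.
    + by apply: vanishes_at01 => //; right; lra.
    + by apply: vanishes_at01 => //; left; lra.
Qed.

Lemma concat_cube_eq f g f' g' t :
  (forall t, cube t -> f t = f' t) -> (forall t, cube t -> g t = g' t) ->
  cube t -> concat i0 f g t = concat i0 f' g' t.
Proof.
  move=> ef eg ht; rewrite !concat_clamp // /reparam.
  by case: Rle_dec => ?; [apply: ef | apply: eg]; apply: cube_upd => //; apply: clamp_in01.
Qed.

End Loops.

Section Homotopy.
Context {X : Type} {d : X -> X -> R} {x0 : X} (hd : is_metric d) {n : nat} {i0 : 'I_n}.
Implicit Types (f g a b h : ('I_n -> R) -> X).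

Lemma homotopic_refl f : Omega d x0 f -> homotopic d x0 f f.
Proof.
  move=> [cf bf]; exists (fun _ => f); split; first exact: cont_on_cylinder_stationary.
  by split; [|split; [|move=> u t _ /bf]].
Qed.

Lemma homotopic_cube_eq f g f' g' : homotopic d x0 f g ->
  (forall t, cube t -> f t = f' t) -> (forall t, cube t -> g t = g' t) ->
  homotopic d x0 f' g'.
Proof.
  move=> [H [cH [H0 [H1 bH]]]] ef eg; exists H.
  split=> //; split; [|split=> //] => t ht; [rewrite -ef | rewrite -eg]; auto.
Qed.

Lemma homotopic_trans f g h :
  homotopic d x0 f g -> homotopic d x0 g h -> homotopic d x0 f h.
Proof.
  move=> [H1 [c1 [f1 [g1 b1]]]] [H2 [c2 [g2 [h2 b2]]]].
  exists (fun u t => if Rle_dec u (1/2) then H1 (clamp (2 * u)) t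
                     else H2 (clamp (2 * u - 1)) t).
  split; [|split; [|split]].
  - apply: (cont_on_cylinder_glue hd (fun u _ => u) (fun _ _ => 1/2) _ _ (fun _ => H1 1)).
    + apply: (cont_on_cylinder_retime H1 (fun u => clamp (2 * u)) 2) => //.
      * lra.
      * by move=> *; apply: clamp_in01.
      * by move=> *; apply: Rle_trans (clamp_lip _ _) _; split_Rabs; lra.
    + apply: (cont_on_cylinder_retime H2 (fun u => clamp (2 * u - 1)) 2) => //.
      * lra.
      * by move=> *; apply: clamp_in01.
      * by move=> *; apply: Rle_trans (clamp_lip _ _) _; split_Rabs; lra.
    + apply: cont_on_cylinder_stationary; apply: cont_on_cylinder_at c1; lra.
    + by move=> u t _ _ le; rewrite clamp_ge1 //; lra.
    + by move=> u t _ ht le; rewrite clamp_le0 ?g2 ?g1 //; lra.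
  - move=> t ht; case: Rle_dec => /= [_|]; last lra.
    by rewrite clamp_le0 ?f1 //; lra.
  - move=> t ht; case: Rle_dec => /= [|_]; first lra.
    by rewrite clamp_ge1 ?h2 //; lra.
  - by move=> u t _ bt; case: Rle_dec => ?; [apply: b1 | apply: b2] => //; apply: clamp_in01.
Qed.

Lemma homotopic_concat a1 a2 b1 b2 :
  homotopic d x0 a1 a2 -> homotopic d x0 b1 b2 ->
  homotopic d x0 (concat i0 a1 b1) (concat i0 a2 b2).
Proof.
  move=> [H [cH [H0 [H1 bH]]]] [K [cK [K0 [K1 bK]]]].
  exists (fun u => concat i0 (H u) (K u)).
  split; first exact: (cont_on_cylinder_concat hd _ _ cH cK bH bK).
  split; [|split].
  - by move=> t; apply: concat_cube_eq.
  - by move=> t; apply: concat_cube_eq.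
  - by move=> u t hu; apply: concat_boundary => s; [apply: bH | apply: bK].
Qed.

Lemma homotopic_reparam h phi psi L :
  Omega d x0 h -> 0 <= L ->
  (forall v, 0 <= v <= 1 -> 0 <= phi v <= 1) ->
  (forall v, 0 <= v <= 1 -> 0 <= psi v <= 1) ->
  (forall k v v', 0 <= v <= 1 -> 0 <= v' <= 1 -> Rabs (v' - v) < k ->
     Rabs (phi v' - phi v) <= L * k) ->
  (forall k v v', 0 <= v <= 1 -> 0 <= v' <= 1 -> Rabs (v' - v) < k ->
     Rabs (psi v' - psi v) <= L * k) ->
  phi 0 = psi 0 -> phi 1 = psi 1 ->
  vanishes_at x0 i0 h (phi 0) -> vanishes_at x0 i0 h (phi 1) ->
  homotopic d x0 (reparam i0 h phi) (reparam i0 h psi).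
Proof.
  move=> [ch bh] hL phi01 psi01 lphi lpsi e0 e1 v0 v1.
  pose mix u v := (1 - u) * phi v + u * psi v.
  have mix01 u v : 0 <= u <= 1 -> 0 <= v <= 1 -> 0 <= mix u v <= 1.
  { by move=> hu hv; have := phi01 v hv; have := psi01 v hv; rewrite /mix; nra. }
  exists (fun u => reparam i0 h (mix u)); split; [|split; [|split]].
  - apply: (cont_on_cylinder_reparam i0 (fun _ => h) mix (L + 1)) => //.
    + lra.
    + exact: cont_on_cylinder_stationary.
    + move=> k u v u' v' hu hv hu' hv' du dv.
      have /Rabs_le_between ? := lphi k v v' hv hv' dv.
      have /Rabs_le_between ? := lpsi k v v' hv hv' dv.
      have /Rabs_lt_between ? := du.
      have := phi01 v hv; have := psi01 v hv => ? ?.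
      apply/Rabs_le_between; rewrite /mix; split; nra.
  - by move=> t _; rewrite /reparam /mix; congr (h (upd i0 t _)); ring.
  - by move=> t _; rewrite /reparam /mix; congr (h (upd i0 t _)); ring.
  - move=> u t hu; apply: reparam_boundary => //; first by move=> v; apply: mix01.
    + by have -> : mix u 0 = phi 0 by rewrite /mix -e0; ring.
    + by have -> : mix u 1 = phi 1 by rewrite /mix -e1; ring.
Qed.

Lemma concat_reverse_r a g : Omega d x0 a -> Omega d x0 g ->
  homotopic d x0 (concat i0 (concat i0 a g) (reverse i0 g)) a.
Proof.
  move=> oa og; have [_ ba] := oa; have [_ bg] := og.
  pose h := concat i0 a g; pose phi v := Rmin (2 * v) (3/2 - v).
  apply: (homotopic_cube_eq (reparam i0 h phi) (reparam i0 h (fun v => v / 2))).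
  - apply: (homotopic_reparam _ _ _ 2); rewrite /phi /Rmin.
    + exact: Omega_concat.
    + lra.
    + by move=> v hv; case: Rle_dec; lra.
    + by move=> v; lra.
    + by move=> k v v' *; do 2 case: Rle_dec; split_Rabs; lra.
    + by move=> k v v' *; split_Rabs; lra.
    + by case: Rle_dec; lra.
    + by case: Rle_dec; lra.
    + case: Rle_dec => ?; last lra.
      by apply: vanishes_at01; [move=> t; apply: concat_boundary | left; lra].
    + case: Rle_dec => ?; first lra.
      have -> : 3/2 - 1 = 1/2 by field.
      exact: concat_vanishes_at_half.
  - move=> t ht; have := ht i0.
    rewrite /reparam /h concat_upd concat_eq concat_upd /reverse reparam_upd /phi /Rmin.
    (* At [t i0 = 1] the two sides are [a] and [g] on boundary slices. *)
    have av v : v = 1 -> a (upd i0 t v) = x0.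
    { by move=> ->; apply/ba/boundary_upd01 => //; right. }
    have gv v : v = 0 -> g (upd i0 t v) = x0.
    { by move=> ->; apply/bg/boundary_upd01 => //; left. }
    case: (Rle_dec (2 * t i0) (3/2 - t i0)) => ?; repeat case: Rle_dec => ? /=;
      first [ by move=> *; exfalso; lra
            | by move=> *; congr (_ (upd i0 t _)); lra
            | by move=> *; rewrite av ?gv //; lra ].
  - move=> t ht; transitivity (a (upd i0 t (t i0))); last by rewrite upd_id.
    have := ht i0.
    rewrite /reparam /h concat_upd; case: Rle_dec => ? ? /=; last lra.
    by congr (_ (upd i0 t _)); field.
Qed.

Lemma concat_reverse_l a g : Omega d x0 a -> Omega d x0 g ->
  homotopic d x0 (concat i0 (reverse i0 g) (concat i0 g a)) a.
Proof.
  move=> oa og; have [_ ba] := oa; have [_ bg] := og.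
  pose h := concat i0 g a; pose phi v := Rmax (1/2 - v) (2 * v - 1).
  apply: (homotopic_cube_eq (reparam i0 h phi) (reparam i0 h (fun v => (v + 1) / 2))).
  - apply: (homotopic_reparam _ _ _ 2); rewrite /phi /Rmax.
    + exact: Omega_concat.
    + lra.
    + by move=> v hv; case: Rle_dec; lra.
    + by move=> v; lra.
    + by move=> k v v' *; do 2 case: Rle_dec; split_Rabs; lra.
    + by move=> k v v' *; split_Rabs; lra.
    + by case: Rle_dec; lra.
    + by case: Rle_dec; lra.
    + case: Rle_dec => ?; first lra.
      have -> : 1/2 - 0 = 1/2 by field.
      exact: concat_vanishes_at_half.
    + case: Rle_dec => ?; last lra.
      by apply: vanishes_at01; [move=> t; apply: concat_boundary | right; lra].
  - move=> t ht; have := ht i0.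
    rewrite /reparam /h concat_upd concat_eq concat_upd /reverse reparam_upd /phi /Rmax.
    case: (Rle_dec (1/2 - t i0) (2 * t i0 - 1)) => ?; repeat case: Rle_dec => ? /=;
      first [ by move=> *; exfalso; lra | by move=> *; congr (_ (upd i0 t _)); lra ].
  - move=> t ht; transitivity (a (upd i0 t (t i0))); last by rewrite upd_id.
    have := ht i0.
    rewrite /reparam /h concat_upd; case: Rle_dec => ? ? /=.
    + have -> : t i0 = 0 by lra.
      rewrite !(vanishes_at01 _ _ bg) ?(vanishes_at01 _ _ ba) //; lra.
    + by congr (_ (upd i0 t _)); field.
Qed.

End Homotopy.

Definition dist_values {X : Type} (d : X -> X -> R) {n : nat}
    (f g : ('I_n -> R) -> X) : R -> Prop :=
  fun r => exists t, cube t /\ r = d (f t) (g t).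

Lemma dist_values_diag {X : Type} {d : X -> X -> R} {x0 : X} (hd : is_metric d)
    {n : nat} (i0 : 'I_n) {a b g : ('I_n -> R) -> X} {r : R} :
  Omega d x0 a -> Omega d x0 b ->
  dist_values d g g r -> dist_values d a b r.
Proof.
  move=> [_ ba] [_ bb] [t [ht ->]]; exists (upd i0 t 0); split.
  - by apply: cube_upd => //; lra.
  - have bt : boundary (upd i0 t 0) by apply: boundary_upd01 => //; left.
    by rewrite ba ?bb // !(dist_xx hd).
Qed.

Section Distance.
Context {X : Type} {d : X -> X -> R} {x0 : X} (hd : is_metric d) {n : nat} {i0 : 'I_n}.
Implicit Types (f g a b : ('I_n -> R) -> X).

Lemma mu_eqset f g f' g' :
  (forall r, dist_values d f g r <-> dist_values d f' g' r) -> mu d f g = mu d f' g'.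
Proof. by move=> E; rewrite /mu; congr real; apply: Lub_Rbar_eqset. Qed.

Lemma dist_values_concat a1 b1 a2 b2 :
  Omega d x0 a1 -> Omega d x0 b1 -> Omega d x0 a2 -> Omega d x0 b2 -> forall r,
  dist_values d (concat i0 a1 a2) (concat i0 b1 b2) r <->
  dist_values d a1 b1 r \/ dist_values d a2 b2 r.
Proof.
  move=> [_ ba1] [_ bb1] [_ ba2] [_ bb2] r; split.
  - move=> [t [ht ->]]; have := ht i0; rewrite !concat_eq; case: Rle_dec => ? ? /=.
    + by left; exists (upd i0 t (2 * t i0)); split => //; apply: cube_upd => //; lra.
    + by right; exists (upd i0 t (2 * t i0 - 1)); split => //; apply: cube_upd => //; lra.
  - move=> [] [t [ht ->]]; have := ht i0 => ?.
    + exists (upd i0 t (t i0 / 2)); split; first by apply: cube_upd => //; lra.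
      rewrite !concat_upd; case: Rle_dec => ? /=; last lra.
      have -> : 2 * (t i0 / 2) = t i0 by field.
      by rewrite upd_id.
    + case: (Req_dec (t i0) 0) => [t0|t0].
      * have bt : boundary t by split => //; exists i0; left.
        by exists t; split => //; rewrite !(concat_boundary (x0 := x0)) ?ba2 ?bb2.
      * exists (upd i0 t ((t i0 + 1) / 2)); split; first by apply: cube_upd => //; lra.
        rewrite !concat_upd; case: Rle_dec => ? /=; first lra.
        have -> : 2 * ((t i0 + 1) / 2) - 1 = t i0 by field.
        by rewrite upd_id.
Qed.

Lemma mu_concat_r a b g : Omega d x0 a -> Omega d x0 b -> Omega d x0 g ->
  mu d (concat i0 a g) (concat i0 b g) = mu d a b.
Proof.
  move=> oa ob og; apply: mu_eqset => r; rewrite dist_values_concat //.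
  by split => [[|/(dist_values_diag hd i0 oa ob)]|] //; left.
Qed.

Lemma mu_concat_l a b g : Omega d x0 a -> Omega d x0 b -> Omega d x0 g ->
  mu d (concat i0 g a) (concat i0 g b) = mu d a b.
Proof.
  move=> oa ob og; apply: mu_eqset => r; rewrite dist_values_concat //.
  by split => [[/(dist_values_diag hd i0 oa ob)|]|] //; right.
Qed.

End Distance.

Section Rho.
Context {X : Type} {d : X -> X -> R} {x0 : X} (hd : is_metric d) {n : nat}.
Implicit Types (f g a b : ('I_n -> R) -> X).

Lemma rho_invariant (T T' : (('I_n -> R) -> X) -> ('I_n -> R) -> X) a b :
  (forall f, Omega d x0 f -> Omega d x0 (T f)) ->
  (forall f, Omega d x0 f -> Omega d x0 (T' f)) ->
  (forall f g, homotopic d x0 f g -> homotopic d x0 (T f) (T g)) ->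
  (forall f g, homotopic d x0 f g -> homotopic d x0 (T' f) (T' g)) ->
  (forall f g, Omega d x0 f -> Omega d x0 g -> mu d (T f) (T g) = mu d f g) ->
  (forall f g, Omega d x0 f -> Omega d x0 g -> mu d (T' f) (T' g) = mu d f g) ->
  (forall f, Omega d x0 f -> homotopic d x0 (T' (T f)) f) ->
  Omega d x0 a -> Omega d x0 b -> rho d x0 a b = rho d x0 (T a) (T b).
Proof.
  move=> OT OT' hT hT' muT muT' T'T oa ob; apply: Glb_Rbar_eqset => r; split.
  - move=> [a' [b' [oa' [ob' [ha [hb ->]]]]]].
    exists (T a'), (T b'); rewrite muT //.
    by do 4 (split; first by auto).
  - move=> [a' [b' [oa' [ob' [ha [hb ->]]]]]].
    exists (T' a'), (T' b'); rewrite muT' //.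
    do 2 (split; first by auto); split; [|split => //].
    + exact: (homotopic_trans hd _ _ _ (hT' _ _ ha) (T'T _ oa)).
    + exact: (homotopic_trans hd _ _ _ (hT' _ _ hb) (T'T _ ob)).
Qed.

Context {i0 : 'I_n}.

Lemma rho_concat_r a b g : Omega d x0 a -> Omega d x0 b -> Omega d x0 g ->
  rho d x0 a b = rho d x0 (concat i0 a g) (concat i0 b g).
Proof.
  move=> oa ob og; have og' := Omega_reverse (i0 := i0) _ og.
  apply: (rho_invariant (fun f => concat i0 f g) (fun f => concat i0 f (reverse i0 g))) => //.
  - by move=> f hf; apply: Omega_concat.
  - by move=> f hf; apply: Omega_concat.
  - by move=> f f' hf; apply: homotopic_concat => //; apply: homotopic_refl.
  - by move=> f f' hf; apply: homotopic_concat => //; apply: homotopic_refl.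
  - by move=> f f' hf hf'; apply: (mu_concat_r hd _ _ _ hf hf').
  - by move=> f f' hf hf'; apply: (mu_concat_r hd _ _ _ hf hf').
  - by move=> f hf; apply: concat_reverse_r.
Qed.

Lemma rho_concat_l a b g : Omega d x0 a -> Omega d x0 b -> Omega d x0 g ->
  rho d x0 a b = rho d x0 (concat i0 g a) (concat i0 g b).
Proof.
  move=> oa ob og; have og' := Omega_reverse (i0 := i0) _ og.
  apply: (rho_invariant (fun f => concat i0 g f) (fun f => concat i0 (reverse i0 g) f)) => //.
  - by move=> f hf; apply: Omega_concat.
  - by move=> f hf; apply: Omega_concat.
  - by move=> f f' hf; apply: homotopic_concat => //; apply: homotopic_refl.
  - by move=> f f' hf; apply: homotopic_concat => //; apply: homotopic_refl.
  - by move=> f f' hf hf'; apply: (mu_concat_l hd _ _ _ hf hf').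
  - by move=> f f' hf hf'; apply: (mu_concat_l hd _ _ _ hf hf').
  - by move=> f hf; apply: concat_reverse_l.
Qed.

End Rho.

Theorem lemma4p3 (X : Type) (d : X -> X -> R) (x0 : X) (hd : is_metric d)
  (n : nat) (hn : (0 < n)%N)
  (alpha beta gamma : ('I_n -> R) -> X)
  (ha : Omega d x0 alpha) (hb : Omega d x0 beta) (hc : Omega d x0 gamma) :
  rho d x0 alpha beta
    = rho d x0 (concat (Ordinal hn) alpha gamma) (concat (Ordinal hn) beta gamma) /\
  rho d x0 alpha beta
    = rho d x0 (concat (Ordinal hn) gamma alpha) (concat (Ordinal hn) gamma beta).
Proof. by split; [apply: rho_concat_r | apply: rho_concat_l]. Qed.
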